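(* Let $k$ be an unramified extension of $\mathbb{Q}_2$ with ring of integers $\mathfrak O_k$, let $C_{2^n}=\langle\sigma\rangle$ ($n\ge1$), and let $\mathcal A$ be a finitely generated $\mathfrak O_k[C_{2^n}]$-module that is torsion-free over $\mathfrak O_k$. Let $H$ be the subgroup of order $2$, $\mathrm{Tr}_H=1+\sigma^{2^{n-1}}$, $\mathcal A^H$ the submodule fixed by $H$, and $\mathrm{Tr}_H\mathcal A$ the image of $\mathrm{Tr}_H$. Then $Q:=\mathrm{Tr}_H\mathcal A/\big((\sigma-1)\mathrm{Tr}_H\mathcal A+2\mathcal A^H\big)$ is free over $\mathfrak O_k/2\mathfrak O_k$. Moreover, if $\mathcal B\subseteq\mathcal A$ is such that the images of $\mathrm{Tr}_H\mathcal B$ form an $\mathfrak O_k/2\mathfrak O_k$-basis of $Q$, then the images of $\mathcal B$ in $\mathcal A/\mathcal A^H$ can be extended to a basis of $\mathcal A/\mathcal A^H$ over $\mathfrak O_k[C_{2^n}]/\langle\mathrm{Tr}_H\rangle$. *)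

From HB Require Import structures.
From mathcomp Require Import all_boot all_order all_algebra.
Set Implicit Arguments. Unset Strict Implicit. Unset Printing Implicit Defensive.
Import Order.TTheory GRing.Theory Num.Theory.
Local Open Scope ring_scope.

(* Abstract stand-in for O_k, k/Q_2 finite unramified:
   a complete discrete valuation ring (integral domain) with uniformizer 2
   (2 <> 0, 2 not a unit, every nonzero element = unit * 2^k),
   complete for the 2-adic topology, with finite residue field R/2R. *)
Definition unramified_Z2_integers (R : idomainType) : Prop :=
  [/\ (2%:R : R) != 0,
      (2%:R : R) \isn't a GRing.unit,
      (forall x : R, x != 0 -> exists (u : R) (k : nat),
            u \is a GRing.unit /\ x = u * 2%:R ^+ k),
      (exists s : seq R, forall x : R, exists2 y, y \in s & exists d, x - y = 2%:R * d)
    & (forall u : nat -> R,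
         (forall k, exists d, u k.+1 - u k = 2%:R ^+ k * d) ->
         exists l : R, forall k, exists d, l - u k = 2%:R ^+ k * d)].

Section ModuleDefs.
Variables (R : idomainType) (A : lmodType R).

(* action of the polynomial p (element of R[X], i.e. of R[C_{2^n}] via X |-> sigma) *)
Definition gact (p : {poly R}) (s : A -> A) (x : A) : A :=
  \sum_(i < size p) p`_i *: iter i s x.

Definition torsion_free : Prop :=
  forall (c : R) (x : A), c *: x = 0 -> c = 0 \/ x = 0.

Definition fin_gen_group_ring (s : A -> A) : Prop :=
  exists g : seq A, forall x : A, exists p : nat -> {poly R},
      x = \sum_(i < size g) gact (p i) s (g`_i).

Definition trH (n : nat) (s : A -> A) (x : A) : A := x + iter (2 ^ n.-1) s x.
Definition fixedH (n : nat) (s : A -> A) (x : A) : Prop := iter (2 ^ n.-1) s x = x.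

Definition inN (n : nat) (s : A -> A) (y : A) : Prop :=
  exists a z : A, fixedH n s z /\ y = (s (trH n s a) - trH n s a) + 2%:R *: z.

(* the images of Tr_H b_i in Q = Tr_H A / N form an (R/2R)-basis of Q *)
Definition Q_basis (n : nat) (s : A -> A) (r : nat) (b : 'I_r -> A) : Prop :=
  (forall a : A, exists c : 'I_r -> R,
      inN n s (trH n s a - \sum_(i < r) c i *: trH n s (b i))) /\
  (forall c : 'I_r -> R, inN n s (\sum_(i < r) c i *: trH n s (b i)) ->
      forall i, exists d : R, c i = 2%:R * d).

(* the images of f_j in A / A^H form a basis over
   Lambda = R[C_{2^n}]/<Tr_H> = R[X] / (X^(2^n) - 1, 1 + X^(2^(n-1))) *)
Definition Lambda_basis (n : nat) (s : A -> A) (m : nat) (f : 'I_m -> A) : Prop :=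
  (forall x : A, exists l : 'I_m -> {poly R},
      fixedH n s (x - \sum_(j < m) gact (l j) s (f j))) /\
  (forall l : 'I_m -> {poly R}, fixedH n s (\sum_(j < m) gact (l j) s (f j)) ->
      forall j, exists q1 q2 : {poly R},
        l j = q1 * ('X^(2 ^ n) - 1) + q2 * (1 + 'X^(2 ^ n.-1))).

End ModuleDefs.

Definition cat_fam (T : Type) (r m : nat) (b : 'I_r -> T) (e : 'I_m -> T)
  (i : 'I_(r + m)) : T :=
  match split i with inl i' => b i' | inr j => e j end.

From HB Require Import structures.
From mathcomp Require Import all_boot all_order all_algebra.
From Stdlib Require Import Classical.
From mathcomp Require Import ring zify.
Set Implicit Arguments. Unset Strict Implicit. Unset Printing Implicit Defensive.
Import Order.TTheory GRing.Theory Num.Theory.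
Local Open Scope ring_scope.

(* Q is a vector space over R/2R spanned by the images of Tr_H u_k, where the u_k
   span A over R, so a basis of Q can be extracted from them.  A Q-basis b remains
   independent mod 2 modulo V := (sigma - 1) A + A^H, because Tr_H maps V into
   (sigma - 1) Tr_H A + 2 A^H; adding suitable u_k to b gives a family f that is
   independent mod 2 and spanning modulo V.
   Spanning lifts to Lambda-spanning modulo A^H: modulo the Lambda-span of f every
   x is (sigma - 1) y, hence (sigma - 1)^(2^(n-1)) y, which is Tr_H y + 2 z since
   (X - 1)^(2^(n-1)) = 1 + X^(2^(n-1)) mod 2, and Nakayama's lemma concludes.
   Independence lifts as well: if sum_j l_j f_j is H-fixed, then each l_j lies in
   ((X - 1)^k, Tr_H) for every k, hence in (2^m, Tr_H) for every m, and the 2-adic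
   separatedness of R forces Tr_H to divide l_j. *)

Definition dvd2 (R : pzRingType) (c : R) := exists d, c = 2%:R * d.

Section SubmodulePredicates.
Variables (R : pzRingType) (A : lmodType R).

Record is_submodule (P : A -> Prop) : Prop := IsSubmodule {
  submod0 : P 0;
  submodD : forall x y, P x -> P y -> P (x + y);
  submodZ : forall (c : R) x, P x -> P (c *: x)
}.

Variable P : A -> Prop.
Hypothesis subP : is_submodule P.

Lemma submodN x : P x -> P (- x).
Proof. by rewrite -scaleN1r; apply: submodZ. Qed.

Lemma submodB x y : P x -> P y -> P (x - y).
Proof. by move=> Px Py; apply: submodD subP _ _ Px (submodN Py). Qed.

Lemma submod_sum (I : Type) (r : seq I) (Q : pred I) (F : I -> A) :
  (forall i, Q i -> P (F i)) -> P (\sum_(i <- r | Q i) F i).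
Proof. by move=> PF; apply: big_ind => //; [apply: submod0 | apply: submodD]. Qed.

Lemma submod_comb (I : finType) (c : I -> R) (f : I -> A) :
  (forall i, P (f i)) -> P (\sum_i c i *: f i).
Proof. by move=> Pf; apply: submod_sum => i _; apply: submodZ. Qed.

Definition spanned_mod (I : finType) (f : I -> A) (x : A) :=
  exists c : I -> R, P (x - \sum_i c i *: f i).

Definition indep_mod2 (I : finType) (f : I -> A) :=
  forall c : I -> R, P (\sum_i c i *: f i) -> forall i, dvd2 (c i).

Variables (I : finType) (f : I -> A).

Lemma is_submodule_spanned_mod : is_submodule (spanned_mod f).
Proof.
split.
- by exists (fun=> 0); rewrite big1 ?subr0 => [|i _]; [apply: submod0 | rewrite scale0r].
- move=> x y [c Pc] [d Pd]; exists (fun i => c i + d i).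
  rewrite (eq_bigr (fun i => c i *: f i + d i *: f i)) => [|i _]; last by rewrite scalerDl.
  by rewrite big_split opprD addrACA; apply: submodD.
- move=> a x [c Pc]; exists (fun i => a * c i).
  rewrite (eq_bigr (fun i => a *: (c i *: f i))) => [|i _]; last by rewrite scalerA.
  by rewrite -scaler_sumr -scalerBr; apply: submodZ.
Qed.

Lemma spanned_mod_self i : spanned_mod f (f i).
Proof.
exists (fun j => (j == i)%:R); rewrite (bigD1 i) //= eqxx scale1r big1 ?addr0 ?subrr.
  exact: submod0.
by move=> j /negbTE ->; rewrite scale0r.
Qed.

Lemma eq_spanned_mod (g : I -> A) x : f =1 g -> spanned_mod f x -> spanned_mod g x.
Proof. by move=> fg [c Pc]; exists c; under eq_bigr do rewrite -fg. Qed.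

Lemma eq_indep_mod2 (g : I -> A) : f =1 g -> indep_mod2 f -> indep_mod2 g.
Proof. by move=> fg indf c; under eq_bigr do rewrite -fg; apply: indf. Qed.

End SubmodulePredicates.

Lemma is_submodule_eq0 (R : pzRingType) (A : lmodType R) :
  is_submodule (fun x : A => x = 0).
Proof. by split=> [|x y -> ->|c x ->]; rewrite ?addr0 ?scaler0. Qed.

Lemma is_submodule_fixed (R : pzRingType) (A : lmodType R) (g : {linear A -> A}) :
  is_submodule (fun x => g x = x).
Proof. by split=> [|x y gx gy|c x gx]; rewrite ?linear0 ?linearD ?linearZ /= ?gx ?gy. Qed.

Lemma is_submodule_add_image (R : pzRingType) (A : lmodType R) (g k : {linear A -> A})
    (P : A -> Prop) :
  is_submodule P -> is_submodule (fun y => exists a z, P z /\ y = g a + k z).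
Proof.
move=> subP; split.
- by exists 0, 0; rewrite !linear0 addr0; split=> //; apply: submod0.
- move=> _ _ [a [z [Pz ->]]] [a' [z' [Pz' ->]]]; exists (a + a'), (z + z').
  by rewrite !linearD addrACA; split=> //; apply: submodD.
- move=> c _ [a [z [Pz ->]]]; exists (c *: a), (c *: z).
  by rewrite !linearZ scalerDr; split=> //; apply: submodZ.
Qed.

Section PolyAction.
Variables (R : idomainType) (A : lmodType R) (s : {linear A -> A}).

Lemma iter_is_linear i : linear (iter i s).
Proof. by elim: i => [|i IH] a x y //=; rewrite IH linearP. Qed.
HB.instance Definition _ i :=
  GRing.isLinear.Build R A A *:%R (iter i s) (iter_is_linear i).

Lemma gact_is_linear p : linear (gact p s).
Proof.
move=> a x y; rewrite /gact scaler_sumr -big_split; apply: eq_bigr => i _ /=.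
by rewrite linearP scalerDr !scalerA mulrC.
Qed.
HB.instance Definition _ p :=
  GRing.isLinear.Build R A A *:%R (gact p s) (gact_is_linear p).

Lemma gact_widen (p : {poly R}) N x : (size p <= N)%N ->
  gact p s x = \sum_(i < N) p`_i *: iter i s x.
Proof.
move=> le_pN; rewrite /gact (big_ord_widen _ (fun i => p`_i *: iter i s x) le_pN).
rewrite big_mkcond; apply: eq_bigr => i _.
by case: ltnP => // le_pi; rewrite nth_default // scale0r.
Qed.

Lemma gactD p q x : gact (p + q) s x = gact p s x + gact q s x.
Proof.
have le_pq : (size (p + q)%R <= size p + size q)%N.
  by rewrite (leq_trans (size_polyD p q)) // geq_max leq_addr leq_addl.
rewrite !(@gact_widen _ (size p + size q)) ?leq_addr ?leq_addl //.
by rewrite -big_split; apply: eq_bigr => i _; rewrite coefD scalerDl.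
Qed.

Lemma gactZ c p x : gact (c *: p) s x = c *: gact p s x.
Proof.
rewrite !(@gact_widen _ (size p)) ?size_scale_leq // scaler_sumr.
by apply: eq_bigr => i _; rewrite coefZ scalerA.
Qed.

Lemma gactB p q x : gact (p - q) s x = gact p s x - gact q s x.
Proof. by rewrite gactD -[- q]scaleN1r gactZ scaleN1r. Qed.

Lemma gactC c x : gact c%:P s x = c *: x.
Proof. by rewrite (@gact_widen _ 1) ?size_polyC ?leq_b1 // big_ord1 coefC. Qed.

Lemma gact0 x : gact 0 s x = 0.
Proof. by rewrite -[0]/(0%:P) gactC scale0r. Qed.

Lemma gact1 x : gact 1 s x = x.
Proof. by rewrite -polyC1 gactC scale1r. Qed.

Lemma gact_iter p i x : gact p s (iter i s x) = iter i s (gact p s x).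
Proof.
by rewrite /gact linear_sum; apply: eq_bigr => j _; rewrite linearZ /= -!iterD addnC.
Qed.

Lemma gact_s p x : gact p s (s x) = s (gact p s x).
Proof. exact: (gact_iter p 1). Qed.

Lemma gactMX p x : gact (p * 'X) s x = gact p s (s x).
Proof.
rewrite (@gact_widen _ (size p).+1) ?(leq_trans (size_polyMleq _ _)) ?size_polyX ?addn2 //.
rewrite big_ord_recl coefMX scale0r add0r.
by apply: eq_bigr => i _; rewrite coefMX /= -iterSr.
Qed.

Lemma gactM p q x : gact (p * q) s x = gact p s (gact q s x).
Proof.
elim/poly_ind: p x => [|p c IH] x; first by rewrite mul0r !gact0.
rewrite mulrDl mulrAC gactD gactMX IH mul_polyC gactZ.
by rewrite gactD gactMX gactC gact_s.
Qed.

Lemma gactXn k x : gact 'X^k s x = iter k s x.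
Proof.
elim: k x => [|k IH] x; first by rewrite expr0 gact1.
by rewrite exprSr gactMX IH iterSr.
Qed.

Lemma gact_Xsub1 x : gact ('X - 1) s x = s x - x.
Proof. by rewrite gactB -['X]expr1 gactXn gact1. Qed.

End PolyAction.

Lemma Xsub1_exp_pow2 (R : comNzRingType) j : exists g : {poly R},
  ('X - 1) ^+ (2 ^ j) = 1 + 'X^(2 ^ j) + 2%:R * g.
Proof.
elim: j => [|j [g Eg]]; first by exists (-1); rewrite expn0 !expr1; ring.
exists ('X^(2 ^ j) + 2%:R * g * (1 + 'X^(2 ^ j)) + 2%:R * g ^+ 2).
by rewrite expnSr !exprM Eg; ring.
Qed.

Lemma exprD_modl (R : comPzRingType) (a b : R) m : exists h, (a + b) ^+ m = a * h + b ^+ m.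
Proof.
elim: m => [|m [h Eh]]; first by exists 0; rewrite !expr0; ring.
by exists (h * (a + b) + b ^+ m); rewrite exprS Eh exprS; ring.
Qed.

Section TwoAdicIntegers.
Variable R : idomainType.
Hypothesis hR : unramified_Z2_integers R.

Lemma two_neq0 : (2%:R : R) != 0.
Proof. by case: hR. Qed.

Lemma ndvd2_unit (c : R) : ~ dvd2 c -> c \is a GRing.unit.
Proof.
move=> nd2c; case: hR => _ _ unit_pow2 _ _.
have c_neq0 : c != 0 by apply: contra_notN nd2c => /eqP ->; exists 0; rewrite mulr0.
have [u [[|k] [u_unit Ec]]] := unit_pow2 c c_neq0; first by rewrite Ec expr0 mulr1.
by case: nd2c; exists (u * 2%:R ^+ k); rewrite Ec exprS; ring.
Qed.

Lemma eq0_dvd_pow2 (x : R) : (forall m, exists d, x = 2%:R ^+ m * d) -> x = 0.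
Proof.
move=> dvdx; have [//|x_neq0] := eqVneq x 0; case: hR => _ two_nunit unit_pow2 _ _.
have [u [k [u_unit Ex]]] := unit_pow2 x x_neq0; have [d Ed] := dvdx k.+1.
have Eu : u = 2%:R * d.
  apply: (@mulIf _ (2%:R ^+ k)); first by rewrite expf_neq0 // two_neq0.
  by rewrite -Ex Ed exprSr; ring.
by move: u_unit; rewrite Eu unitrM (negbTE two_nunit).
Qed.

Definition eqmod2 (a b : R) := dvd2 (a - b).

Lemma det_1subZ2_eqmod2 p (M : 'M[R]_p) : eqmod2 (\det (1%:M - 2%:R *: M)) 1.
Proof.
have eqmod2_refl a : eqmod2 a a by exists 0; rewrite subrr mulr0.
have eqmod2_sub2 a b : eqmod2 (a - 2%:R * b) a by exists (- b); ring.
have eqmod2D a b c d : eqmod2 a b -> eqmod2 c d -> eqmod2 (a + c) (b + d).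
  by move=> [x Ex] [y Ey]; exists (x + y); rewrite mulrDr -Ex -Ey; ring.
have eqmod2M a b c d : eqmod2 a b -> eqmod2 c d -> eqmod2 (a * c) (b * d).
  move=> [x Ex] [y Ey]; exists (x * c + b * y).
  by rewrite mulrDr mulrA -Ex mulrCA -Ey; ring.
suff: eqmod2 (\det (1%:M - 2%:R *: M)) (\det (1%:M : 'M[R]_p)) by rewrite det1.
rewrite /determinant.
apply: (big_ind2 eqmod2); [exact: eqmod2_refl | exact: eqmod2D |] => sigma _.
apply: (eqmod2M); first exact: eqmod2_refl.
apply: (big_ind2 eqmod2); [exact: eqmod2_refl | exact: eqmod2M |] => i _.
by rewrite !mxE; apply: eqmod2_sub2.
Qed.

Lemma det_1subZ2_unit p (M : 'M[R]_p) : \det (1%:M - 2%:R *: M) \is a GRing.unit.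
Proof.
apply: ndvd2_unit => -[d Ed]; have [e Ee] := det_1subZ2_eqmod2 M.
case: hR => _ /negP two_nunit _ _ _; apply: two_nunit; apply/unitrPr.
by exists (d - e); rewrite mulrBr -Ed -Ee; ring.
Qed.

Lemma dvdp_of_dvdp_mod_pow2 (P l : {poly R}) : P \is monic ->
  (forall m, exists a b, l = 2%:R ^+ m * a + b * P) -> exists q, l = q * P.
Proof.
move=> monP dvd_mod; have P_neq0 := monic_neq0 monP.
have small (q : {poly R}) : (size (q * P)%R < size P)%N -> q = 0.
  case: (eqVneq q 0) => // q_neq0; rewrite size_mul //.
  by have := size_poly_gt0 q; rewrite q_neq0; lia.
exists (l %/ P); rewrite {1}(Pdiv.IdomainMonic.divp_eq monP l).
suff -> : l %% P = 0 by rewrite addr0.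
apply/polyP => i; rewrite coef0; apply: eq0_dvd_pow2 => m.
have [a [b Eab]] := dvd_mod m.
(* By uniqueness of the remainder, l %% P = 2 ^ m * (a %% P). *)
have Ea := Pdiv.IdomainMonic.divp_eq monP a.
have Er : l %% P - 2%:R ^+ m * (a %% P) = (b + 2%:R ^+ m * (a %/ P) - l %/ P) * P.
  rewrite (_ : l %% P = l - l %/ P * P); last first.
    by apply/eqP; rewrite eq_sym subr_eq addrC -Pdiv.IdomainMonic.divp_eq.
  by rewrite {1}Eab {1}Ea; ring.
have q0 : b + 2%:R ^+ m * (a %/ P) - l %/ P = 0.
  apply: small; rewrite -Er (leq_ltn_trans (size_polyD _ _)) // gtn_max ltn_modp P_neq0.
  rewrite size_polyN -natrX mulr_natl -scaler_nat.
  by rewrite (leq_ltn_trans (size_scale_leq _ _)) // ltn_modp.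
move: Er; rewrite q0 mul0r => /eqP; rewrite subr_eq0 => /eqP ->.
by exists (a %% P)`_i; rewrite -!natrX !mulr_natl coefMn.
Qed.

End TwoAdicIntegers.

Section Nakayama.
Variables (R : idomainType) (A : lmodType R).
Hypothesis hR : unramified_Z2_integers R.
Variables (p : nat) (u : 'I_p -> A).
Hypothesis u_span : forall x, exists c : 'I_p -> R, x = \sum_k c k *: u k.

Let rowcomb (C : 'M[R]_p) k := \sum_l C k l *: u l.

Lemma rowcomb_mul (C D : 'M[R]_p) k : rowcomb (C *m D) k = \sum_j C k j *: rowcomb D j.
Proof.
rewrite /rowcomb (eq_bigr (fun l => \sum_j (C k j * D j l) *: u l)); last first.
  by move=> l _; rewrite mxE scaler_suml.
rewrite exchange_big; apply: eq_bigr => j _ /=.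
by rewrite scaler_sumr; apply: eq_bigr => l _; rewrite scalerA.
Qed.

Lemma rowcomb_scalar (c : R) k : rowcomb c%:M k = c *: u k.
Proof.
rewrite /rowcomb (bigD1 k) //= mxE eqxx mulr1n big1 ?addr0 // => l /negbTE.
by rewrite mxE eq_sym => ->; rewrite mulr0n scale0r.
Qed.

Lemma nakayama2 (P : A -> Prop) : is_submodule P ->
  (forall x, exists z, P (x - 2%:R *: z)) -> forall x, P x.
Proof.
(* Determinant trick: the rows of (1 - 2 M) u lie in P and \det (1 - 2 M) is a unit. *)
move=> subP two_div.
have /fin_all_exists [a Pa] : forall k, exists a : 'I_p -> R,
    P (u k - 2%:R *: \sum_l a l *: u l).
  by move=> k; have [z Pz] := two_div (u k); have [a Ez] := u_span z; exists a; rewrite -Ez.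
pose B : 'M[R]_p := 1%:M - 2%:R *: \matrix_(k, l) a k l.
have PB k : P (rowcomb B k).
  have -> : rowcomb B k = rowcomb 1%:M k - 2%:R *: \sum_l a k l *: u l.
    rewrite /rowcomb scaler_sumr -sumrB; apply: eq_bigr => l _.
    by rewrite !mxE scalerBl scalerA.
  by rewrite rowcomb_scalar scale1r; apply: Pa.
have Pu k : P (u k).
  have unitB := det_1subZ2_unit hR (\matrix_(k, l) a k l).
  rewrite -[u k]scale1r -(mulVr unitB) -scalerA -rowcomb_scalar -mul_adj_mx rowcomb_mul.
  by apply: submodZ => //; apply: submod_comb.
by move=> x; have [c ->] := u_span x; apply: submod_comb.
Qed.

End Nakayama.

Lemma cat_fam_lshift (T : Type) r m (b : 'I_r -> T) (e : 'I_m -> T) i :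
  cat_fam b e (lshift m i) = b i.
Proof. by rewrite /cat_fam -[lshift m i]/(unsplit (inl i : 'I_r + 'I_m)) unsplitK. Qed.

Lemma cat_fam_rshift (T : Type) r m (b : 'I_r -> T) (e : 'I_m -> T) j :
  cat_fam b e (rshift r j) = e j.
Proof. by rewrite /cat_fam -[rshift r j]/(unsplit (inr j : 'I_r + 'I_m)) unsplitK. Qed.

Section ExtendIndependentFamily.
Variables (R : idomainType) (A : lmodType R).
Hypothesis hR : unramified_Z2_integers R.
Variable P : A -> Prop.
Hypothesis subP : is_submodule P.
Variables (r p : nat) (v : 'I_r -> A) (w : 'I_p -> A).
Hypothesis P2w : forall k, P (2%:R *: w k).

(* A subfamily of w is encoded by its index set S; only the final one is
   reindexed as a family on 'I_(r + #|S|). *)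
Definition comb (d : 'I_r -> R) (S : {set 'I_p}) (c : 'I_p -> R) :=
  \sum_i d i *: v i + \sum_(k in S) c k *: w k.

Definition indep_on (S : {set 'I_p}) :=
  forall d c, P (comb d S c) -> (forall i, dvd2 (d i)) /\ (forall k, k \in S -> dvd2 (c k)).

Definition spanned_on (S : {set 'I_p}) x := exists d c, P (x - comb d S c).

Lemma spanned_on_mem (S : {set 'I_p}) k : k \in S -> spanned_on S (w k).
Proof.
move=> kS; exists (fun=> 0), (fun j => (j == k)%:R).
rewrite /comb big1 ?add0r => [|i _]; last by rewrite scale0r.
rewrite (bigD1 k) //= eqxx scale1r big1 ?addr0 ?subrr => [|j /andP [_ /negbTE ->]].
  exact: submod0.
by rewrite scale0r.
Qed.

Lemma exists_maximal_indep_on : indep_on set0 ->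
  exists S, indep_on S /\ forall k, k \notin S -> ~ indep_on (k |: S).
Proof.
have card_lt (S : {set 'I_p}) k : k \notin S -> (#|S| < p)%N.
  by move=> kS; have := max_card (mem (k |: S)); rewrite card_ord cardsU1 kS.
suff grow m (S : {set 'I_p}) : (p - #|S| <= m)%N -> indep_on S ->
    exists S', indep_on S' /\ forall k, k \notin S' -> ~ indep_on (k |: S').
  by apply: (grow p); rewrite leq_subr.
elim: m S => [|m IH] S le_m indS.
  by exists S; split=> // k kS; have := card_lt S k kS; lia.
have [maxS|not_max] := classic (forall k, k \notin S -> ~ indep_on (k |: S)).
  by exists S.
have [k not_maxk] := not_all_ex_not _ _ not_max.
have [kS /NNPP indkS] := imply_to_and _ _ not_maxk.
by apply: (IH _ _ indkS); rewrite cardsU1 kS; have := card_lt S k kS; lia.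
Qed.

Lemma spanned_on_maximal (S : {set 'I_p}) k :
  indep_on S -> k \notin S -> ~ indep_on (k |: S) -> spanned_on S (w k).
Proof.
move=> indS kS not_indkS; have [d not_indd] := not_all_ex_not _ _ not_indkS.
have [c not_indc] := not_all_ex_not _ _ not_indd.
have [PkS not_dvd2] := imply_to_and _ _ not_indc.
have EkS : comb d (k |: S) c = c k *: w k + comb d S c.
  by rewrite /comb big_setU1 //= addrCA.
rewrite EkS in PkS.
have [[e Ee]|nd2ck] := classic (dvd2 (c k)).
  have PS : P (comb d S c).
    have -> : comb d S c = c k *: w k + comb d S c - e *: (2%:R *: w k).
      by rewrite scalerA mulrC -Ee [c k *: _ + _]addrC addrK.
    by apply: submodB => //; apply: (submodZ subP) (P2w k).
  case: not_dvd2; have [dvd2d dvd2c] := indS d c PS; split=> // j.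
  by rewrite in_setU1 => /predU1P [->|/dvd2c //]; exists e.
have ck_unit := ndvd2_unit hR nd2ck.
exists (fun i => - ((c k)^-1 * d i)), (fun j => - ((c k)^-1 * c j)).
suff -> : w k - comb (fun i => - ((c k)^-1 * d i)) S (fun j => - ((c k)^-1 * c j))
  = (c k)^-1 *: (c k *: w k + comb d S c) by apply: submodZ.
rewrite /comb scalerDr scalerA mulVr // scale1r scalerDr !scaler_sumr opprD -!sumrN.
by congr (_ + (_ + _)); apply: eq_bigr => i _; rewrite scaleNr opprK scalerA.
Qed.

Definition enum_coef (S : {set 'I_p}) (c : 'I_#|S| -> R) (k : 'I_p) : R :=
  if [pick j | enum_val j == k] is Some j then c j else 0.

Lemma enum_coefE (S : {set 'I_p}) (c : 'I_#|S| -> R) j : enum_coef c (enum_val j) = c j.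
Proof.
rewrite /enum_coef; case: pickP => [j' /eqP /enum_val_inj -> //|].
by move/(_ j); rewrite eqxx.
Qed.

Theorem extend_indep_mod2 : indep_mod2 P v ->
  exists m (h : 'I_m -> 'I_p), indep_mod2 P (cat_fam v (w \o h)) /\
    forall k, spanned_mod P (cat_fam v (w \o h)) (w k).
Proof.
move=> indv.
have ind0 : indep_on set0.
  move=> d c; rewrite /comb big_set0 addr0 => /indv dvd2d.
  by split=> // k; rewrite in_set0.
have [S [indS maxS]] := exists_maximal_indep_on ind0.
exists #|S|, enum_val; set F := cat_fam _ _.
have combF (c : 'I_(r + #|S|) -> R) : \sum_i c i *: F i =
    comb (fun i => c (lshift #|S| i)) S (enum_coef (fun j => c (rshift r j))).
  rewrite big_split_ord /comb [\sum_(k in S) _]big_enum_val.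
  congr (_ + _); apply: eq_bigr => i _;
    by rewrite /F ?cat_fam_lshift ?cat_fam_rshift ?enum_coefE.
split.
  move=> c; rewrite combF => /indS [dvd2l dvd2r] i; rewrite -(splitK i).
  case: (split i) => [i'|j] /=; first exact: dvd2l.
  by rewrite -(enum_coefE (fun j => c (rshift r j))); apply/dvd2r/enum_valP.
move=> k; have [d [c Pdc]] : spanned_on S (w k).
  have [kS|kS] := boolP (k \in S); first exact: spanned_on_mem.
  exact: spanned_on_maximal (maxS k kS).
exists (cat_fam d (c \o enum_val)).
rewrite big_split_ord; move: Pdc; rewrite /comb [\sum_(k in S) _]big_enum_val.
congr (P (_ - (_ + _))); apply: eq_bigr => i _;
  by rewrite /F ?cat_fam_lshift ?cat_fam_rshift.
Qed.

End ExtendIndependentFamily.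

Lemma poly_sub1_factor (R : comNzRingType) (p : {poly R}) :
  exists t, p = t * ('X - 1) + (p.[1])%:P.
Proof.
have /factor_theorem [t Et] : root (p - (p.[1])%:P) 1 by rewrite rootE !hornerE subrr.
by exists t; rewrite -polyC1 -Et; ring.
Qed.

Section HalfTrace.
Variables (R : idomainType) (A : lmodType R) (n : nat) (s : {linear A -> A}).
Hypothesis n_gt0 : (0 < n)%N.
Hypothesis s_order : iter (2 ^ n) s =1 id.

Local Notation K := (2 ^ n.-1)%N.
Local Notation fixed := (fixedH n s).
Local Notation tr := (trH n s).

Lemma trH_is_linear : linear tr.
Proof. by move=> a x y; rewrite /trH linearP scalerDr addrACA. Qed.
HB.instance Definition _ := GRing.isLinear.Build R A A *:%R tr trH_is_linear.

Lemma iter_halfK x : iter K s (iter K s x) = x.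
Proof. by rewrite -iterD addnn -mul2n -expnS prednK // s_order. Qed.

Lemma iter_modn i x : iter i s x = iter (i %% 2 ^ n) s x.
Proof.
rewrite {1}(divn_eq i (2 ^ n)) iterD.
by elim: (i %/ 2 ^ n)%N => [|k IH]; rewrite ?mulSn ?iterD ?s_order.
Qed.

Lemma is_submodule_fixedH : is_submodule fixed.
Proof. exact: is_submodule_fixed (iter K s). Qed.

Lemma fixedH_gact p x : fixed x -> fixed (gact p s x).
Proof. by rewrite /fixedH -gact_iter => ->. Qed.

Lemma fixedH_trH x : fixed (tr x).
Proof. by rewrite /fixedH linearD /= iter_halfK addrC. Qed.

Lemma trH_s x : tr (s x) = s (tr x).
Proof. by rewrite /trH -iterSr linearD. Qed.

Lemma trH_fixedH h : fixed h -> tr h = 2%:R *: h.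
Proof. by rewrite /trH => ->; rewrite scaler_nat mulr2n. Qed.

Definition trH_poly : {poly R} := 1 + 'X^K.

Lemma gact_trH_poly x : gact trH_poly s x = tr x.
Proof. by rewrite gactD gact1 gactXn. Qed.

Lemma trH_poly_monic : trH_poly \is monic.
Proof. by rewrite /trH_poly addrC -polyC1 monicXnaddC // expn_gt0. Qed.

Lemma trH_poly_sub2 : trH_poly - 2%:R = ('X - 1) * \sum_(i < K) 'X^i.
Proof. by rewrite -subrX1 /trH_poly; ring. Qed.

Lemma Xsub1_exp_trH_poly : exists g, ('X - 1) ^+ K = trH_poly + 2%:R * g.
Proof. exact: Xsub1_exp_pow2. Qed.

Definition inV y := exists a h, fixed h /\ y = s a - a + h.

Lemma is_submodule_inV : is_submodule inV.
Proof. exact: (is_submodule_add_image (s \- idfun) idfun is_submodule_fixedH). Qed.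

Lemma is_submodule_inN : is_submodule (inN n s).
Proof.
exact: (is_submodule_add_image ((s \o tr) \- tr) (2%:R \*: idfun) is_submodule_fixedH).
Qed.

Lemma inV_2 x : inV (2%:R *: x).
Proof.
pose y := gact (\sum_(i < K) 'X^i) s x.
have Ey : iter K s x - x = s y - y.
  rewrite -gact_Xsub1 -gactM -trH_poly_sub2 gactB -polyC_natr gactC gact_trH_poly /trH.
  by rewrite scaler_nat mulr2n opprD addrA [x + _]addrC addrK.
exists (- y), (tr x); split; first exact: fixedH_trH.
rewrite linearN /= opprK [- s y + y]addrC -opprB -Ey /trH opprB.
by rewrite addrACA addNr addr0 scaler_nat mulr2n.
Qed.

Lemma trH_inV y : inV y -> inN n s (tr y).
Proof.
move=> [a [h [fixh ->]]]; exists a, h; split=> //.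
by rewrite -(trH_fixedH fixh) -trH_s -linearB -linearD.
Qed.

Section ModSub1.
Variable P : A -> Prop.
Hypotheses (subP : is_submodule P) (P_gact : forall p x, P x -> P (gact p s x)).
Hypothesis mod_sub1 : forall x, exists y, P (x - (s y - y)).

Lemma mod_Xsub1_exp k x : exists y, P (x - gact (('X - 1) ^+ k) s y).
Proof.
elim: k x => [|k IH] x; first by exists x; rewrite expr0 gact1 subrr; apply: submod0.
have [y Py] := IH x; have [y' Py'] := mod_sub1 y; exists y'.
have -> : x - gact (('X - 1) ^+ k.+1) s y' =
    (x - gact (('X - 1) ^+ k) s y) + gact (('X - 1) ^+ k) s (y - (s y' - y')).
  by rewrite exprSr gactM gact_Xsub1 [gact _ s (y - _)]linearB addrA subrK.
by apply: submodD => //; apply: P_gact.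
Qed.

Lemma mod_two_of_mod_sub1 : (forall x, fixed x -> P x) ->
  forall x, exists z, P (x - 2%:R *: z).
Proof.
move=> P_fixed x; have [g Eg] := Xsub1_exp_trH_poly; have [y Py] := mod_Xsub1_exp K x.
exists (gact g s y).
have -> : x - 2%:R *: gact g s y = (x - gact (('X - 1) ^+ K) s y) + tr y.
  rewrite Eg gactD gact_trH_poly gactM -polyC_natr gactC.
  by move: (tr y) (2%:R *: _) => a b; rewrite opprD addrA addrAC subrK.
by apply: submodD => //; apply/P_fixed/fixedH_trH.
Qed.

End ModSub1.

Section LambdaSpan.
Variables (q : nat) (f : 'I_q -> A).

Definition lambda_spanned x :=
  exists l : 'I_q -> {poly R}, fixed (x - \sum_j gact (l j) s (f j)).

Lemma is_submodule_lambda_spanned : is_submodule lambda_spanned.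
Proof.
have fixP := is_submodule_fixedH.
split.
- by exists (fun=> 0); rewrite big1 ?subr0 => [|j _]; [apply: submod0 | apply: gact0].
- move=> x y [l fixl] [l' fixl']; exists (fun j => l j + l' j).
  under eq_bigr do rewrite gactD; rewrite big_split opprD addrACA.
  exact: submodD.
- move=> c x [l fixl]; exists (fun j => c *: l j).
  under eq_bigr do rewrite gactZ; rewrite -scaler_sumr -scalerBr.
  exact: submodZ.
Qed.

Lemma lambda_spannedW x : fixed x -> lambda_spanned x.
Proof. by move=> fixx; exists (fun=> 0); rewrite big1 ?subr0 // => j _; apply: gact0. Qed.

Lemma lambda_spanned_gact p x : lambda_spanned x -> lambda_spanned (gact p s x).
Proof.
move=> [l fixl]; exists (fun j => p * l j); under eq_bigr do rewrite gactM.
by rewrite -linear_sum -linearB; apply: fixedH_gact.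
Qed.

Theorem lambda_span (hR : unramified_Z2_integers R) (p : nat) (u : 'I_p -> A) :
  (forall x, exists c : 'I_p -> R, x = \sum_k c k *: u k) ->
  (forall x, spanned_mod inV f x) -> forall x, lambda_spanned x.
Proof.
move=> u_span f_span; have subL := is_submodule_lambda_spanned.
apply: (nakayama2 hR u_span subL).
apply: mod_two_of_mod_sub1 => //; [exact: lambda_spanned_gact | | exact: lambda_spannedW].
move=> x; have [c [a [h [fixh Eh]]]] := f_span x; exists a, (fun j => (c j)%:P).
under eq_bigr do rewrite gactC.
by rewrite addrAC Eh addrAC subrr add0r.
Qed.

End LambdaSpan.

Section LambdaIndep.
Hypotheses (hR : unramified_Z2_integers R) (htf : torsion_free A).

Lemma fixedH_of_sub1 y : fixed (s y - y) -> fixed y.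
Proof.
rewrite /fixedH linearB /= -iterSr iterS => fix_sub1.
(* w is fixed by sigma and negated by sigma^K, hence 2 w = 0. *)
set w := iter K s y - y.
have Es : s (iter K s y) = s y - y + iter K s y by rewrite -fix_sub1 subrK.
have sw : s w = w by rewrite /w linearB /= Es addrAC (addrC (s y)) addrK addrC.
have iter_w i : iter i s w = w by elim: i => //= i ->.
have w2 : 2%:R *: w = 0.
  rewrite scaler_nat mulr2n -{1}(iter_w K) /w linearB /= iter_halfK.
  by rewrite addrA subrK subrr.
by case: (htf w2) => [/eqP|/eqP]; rewrite ?(negbTE (two_neq0 hR)) // subr_eq0 => /eqP.
Qed.

Variables (q : nat) (f : 'I_q -> A).
Hypothesis f_indep : indep_mod2 inV f.

Lemma lambda_fixed_factor (l : 'I_q -> {poly R}) : fixed (\sum_j gact (l j) s (f j)) ->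
  exists mu : 'I_q -> {poly R},
    (forall j, exists nu, l j = ('X - 1) * mu j + nu * trH_poly) /\
    fixed (\sum_j gact (mu j) s (f j)).
Proof.
(* l_j = t_j (X - 1) + l_j(1), where the l_j(1) are even because sum_j l_j(1) f_j
   lies in V; then 2 = Tr_H - (X - 1) psi moves the remainder into (Tr_H). *)
move=> fixl; have fixP := is_submodule_fixedH.
have [t Et] := fin_all_exists (fun j => poly_sub1_factor (l j)).
pose T := \sum_j gact (t j) s (f j).
have El : \sum_j gact (l j) s (f j) = s T - T + \sum_j (l j).[1] *: f j.
  rewrite /T linear_sum -sumrB -big_split; apply: eq_bigr => j _ /=.
  by rewrite {1}Et gactD gactM gact_Xsub1 gactC linearB /= gact_s.
have /fin_all_exists [d Ed] : forall j, exists d, (l j).[1] = 2%:R * d.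
  apply: (@f_indep (fun j => (l j).[1])).
  exists (- T), (\sum_j gact (l j) s (f j)); split=> //.
  by rewrite El linearN /= opprK addrA [- _ + T]addrC -opprB addNr add0r.
pose psi : {poly R} := \sum_(i < K) 'X^i.
pose mu j := t j - (d j)%:P * psi.
have Elj j : l j = ('X - 1) * mu j + (d j)%:P * trH_poly.
  have E2 : (2%:R : {poly R}) = trH_poly - ('X - 1) * psi.
    by rewrite -trH_poly_sub2 opprB addrC subrK.
  by rewrite {1}Et Ed polyCM polyC_natr E2 /mu; ring.
exists mu; split=> [j|]; first by exists (d j)%:P.
pose M := \sum_j gact (mu j) s (f j).
have EM : \sum_j gact (l j) s (f j) = s M - M + tr (\sum_j d j *: f j).
  rewrite /M linear_sum [tr _]linear_sum /= -sumrB -big_split; apply: eq_bigr => j _ /=.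
  by rewrite Elj gactD !gactM gact_Xsub1 gactC gact_trH_poly linearZ.
apply: fixedH_of_sub1; rewrite -(addrK (tr (\sum_j d j *: f j)) (s M - M)) -EM.
by apply: submodB => //; apply: fixedH_trH.
Qed.

Lemma lambda_fixed_factor_exp k (l : 'I_q -> {poly R}) :
  fixed (\sum_j gact (l j) s (f j)) ->
  forall j, exists mu nu, l j = ('X - 1) ^+ k * mu + nu * trH_poly.
Proof.
elim: k l => [|k IH] l fixl j; first by exists (l j), 0; rewrite expr0 mul1r mul0r addr0.
have [mu [Emu fixmu]] := lambda_fixed_factor fixl; have [nu Enu] := Emu j.
have [mu' [nu' Emu']] := IH mu fixmu j.
by exists mu', (('X - 1) * nu' + nu); rewrite Enu Emu' exprS; ring.
Qed.

Theorem lambda_indep (l : 'I_q -> {poly R}) : fixed (\sum_j gact (l j) s (f j)) ->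
  forall j, exists q1 q2 : {poly R},
    l j = q1 * ('X^(2 ^ n) - 1) + q2 * (1 + 'X^(2 ^ n.-1)).
Proof.
move=> fixl j; have [g Eg] := Xsub1_exp_trH_poly.
have [|q' Eq'] := dvdp_of_dvdp_mod_pow2 hR trH_poly_monic (l := l j).
  move=> m; have [mu [nu ->]] := lambda_fixed_factor_exp (K * m) fixl j.
  have [h Eh] := exprD_modl trH_poly (2%:R * g) m.
  by exists (g ^+ m * mu), (h * mu + nu); rewrite exprM Eg Eh exprMn; ring.
by exists 0, q'; rewrite mul0r add0r Eq'.
Qed.

End LambdaIndep.

Lemma fin_gen_spanning_family : fin_gen_group_ring s ->
  exists p (u : 'I_p -> A), forall x, exists c : 'I_p -> R, x = \sum_k c k *: u k.
Proof.
move=> [g Eg]; pose U := [seq iter i s y | y <- g, i <- iota 0 (2 ^ n)].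
pose u (k : 'I_(size U)) := U`_k; exists (size U), u => x.
suff [c /subr0_eq Ex] : spanned_mod (fun y : A => y = 0) u x by exists c.
have subU := is_submodule_spanned_mod (is_submodule_eq0 A) u.
have [l ->] := Eg x; apply: (submod_sum subU) => j _.
apply: (submod_sum subU) => i _; apply: (submodZ subU); rewrite iter_modn.
set y := iter _ s _; have Uy : y \in U.
  by apply: allpairs_f; rewrite ?mem_nth ?mem_iota ?ltn_mod ?expn_gt0.
have lt_y : (index y U < size U)%N by rewrite index_mem.
rewrite -(nth_index 0 Uy).
exact: (spanned_mod_self (is_submodule_eq0 A) u (Ordinal lt_y)).
Qed.

End HalfTrace.

Theorem lemma2p2 (R : idomainType) (A : lmodType R) (n : nat)
  (s : {linear A -> A}) :
  unramified_Z2_integers R ->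
  (0 < n)%N ->
  iter (2 ^ n) s =1 id ->
  fin_gen_group_ring s ->
  torsion_free A ->
  (exists (r : nat) (b : 'I_r -> A), Q_basis n s b) /\
  (forall (r : nat) (b : 'I_r -> A), Q_basis n s b ->
     exists (m : nat) (e : 'I_m -> A), Lambda_basis n s (cat_fam b e)).
Proof.
move=> hR n_gt0 s_order fin_gen htf.
have [p [u u_span]] := fin_gen_spanning_family s_order fin_gen.
have subN := is_submodule_inN n s; have subV := is_submodule_inV n s.
split.
  pose v0 (i : 'I_0) : A := 0.
  have N2 k : inN n s (2%:R *: trH n s (u k)).
    by exists 0, (trH n s (u k)); rewrite !linear0 !add0r; split=> //; exact: fixedH_trH.
  have indv0 : indep_mod2 (inN n s) (trH n s \o v0) by move=> c _ [].
  have [m [h [indF spanF]]] := extend_indep_mod2 hR subN N2 indv0.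
  pose b := cat_fam v0 (u \o h).
  have Eb : cat_fam (trH n s \o v0) (trH n s \o u \o h) =1 trH n s \o b.
    by move=> i; rewrite /b /cat_fam /=; case: (split i).
  exists (0 + m)%N, b; split; last exact: eq_indep_mod2 Eb indF.
  move=> a; apply: (eq_spanned_mod Eb); have [c ->] := u_span a.
  rewrite linear_sum; under eq_bigr do rewrite linearZ.
  exact: (submod_comb (is_submodule_spanned_mod subN _) c spanF).
move=> r b [_ indQ].
have indb : indep_mod2 (inV n s) b.
  move=> c /trH_inV; rewrite linear_sum.
  by under eq_bigr do rewrite linearZ; apply: indQ.
have V2 k := inV_2 n_gt0 s_order (u k).
have [m [h [indF spanF]]] := extend_indep_mod2 hR subV V2 indb.
exists m, (u \o h); split; last exact: (lambda_indep n_gt0 s_order hR htf indF).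
apply: (lambda_span n_gt0 s_order hR u_span) => x; have [c ->] := u_span x.
exact: (submod_comb (is_submodule_spanned_mod subV _) c spanF).
Qed.
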